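(* Let $(X,d_X)$, $(Y,d_Y)$ be metric spaces and $f:X\to X$, $g:Y\to Y$ maps. Suppose $h:X\to Y$ is a homeomorphism with $h\circ f=g\circ h$. Then for all $x,y\in X$, $x\,\mathcal{C}^+\,y$ (with respect to $f$) if and only if $h(x)\,\mathcal{C}^+\,h(y)$ (with respect to $g$).
   Context: For a metric space $(X,d)$ and a map $f:X\to X$, let $C(X,\mathbb{R}^+)$ be the set of continuous functions $\varepsilon:X\to(0,\infty)$. Write $x\,\mathcal{C}^+\,y$ if for every $\varepsilon\in C(X,\mathbb{R}^+)$ there are finitely many points $x_0=x,x_1,\dots,x_n=y$ in $X$, $n\in\mathbb{N}$, with $d(f(x_i),x_{i+1})<\varepsilon(f(x_i))$ for all $i=0,\dots,n-1$. *)

From Stdlib Require Import Reals.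
Open Scope R_scope.

Record MetricSpace := {
  carrier :> Type;
  dist : carrier -> carrier -> R;
  dist_nonneg : forall x y, 0 <= dist x y;
  dist_eq0 : forall x y, dist x y = 0 <-> x = y;
  dist_sym : forall x y, dist x y = dist y x;
  dist_tri : forall x y z, dist x z <= dist x y + dist y z
}.

Arguments dist {m} _ _.

Definition mcontinuous {X Y : MetricSpace} (h : X -> Y) : Prop :=
  forall x (e : R), 0 < e -> exists delta, 0 < delta /\
    forall y, dist x y < delta -> dist (h x) (h y) < e.

Definition rcontinuous {X : MetricSpace} (eps : X -> R) : Prop :=
  forall x (e : R), 0 < e -> exists delta, 0 < delta /\
    forall y, dist x y < delta -> Rabs (eps y - eps x) < e.

Definition pos_cont_fun {X : MetricSpace} (eps : X -> R) : Prop :=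
  rcontinuous eps /\ forall x, 0 < eps x.

Definition homeomorphism {X Y : MetricSpace} (h : X -> Y) : Prop :=
  exists k : Y -> X, mcontinuous h /\ mcontinuous k /\
    (forall x, k (h x) = x) /\ (forall y, h (k y) = y).

Definition CPlus {X : MetricSpace} (f : X -> X) (x y : X) : Prop :=
  forall eps : X -> R, pos_cont_fun eps ->
    exists (n : nat) (c : nat -> X),
      (1 <= n)%nat /\ c 0%nat = x /\ c n = y /\
      forall i, (i < n)%nat -> dist (f (c i)) (c (S i)) < eps (f (c i)).

(* A homeomorphism h conjugating f to g maps f-chains to g-chains: given eps on Y,
   it suffices to find a positive continuous delta on X such that d(a,b) < delta(a)
   forces d(h a, h b) < eps(h a).  Continuity of h and of eps only give such radii
   pointwise; a continuous choice is the supremum of the radii r <= 1 for which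
   every two-step path a -> z -> b of length < r stays inside the good region.
   This supremum is 1-Lipschitz, hence continuous. *)

From Stdlib Require Import Reals Lra Classical.
Open Scope R_scope.

Lemma lub_approx (E : R -> Prop) (m t : R) :
  is_lub E m -> t < m -> exists r, E r /\ t < r.
Proof.
  intros [_ m_least] t_lt_m.
  apply NNPP; intros no_r.
  enough (m <= t) by lra.
  apply m_least; intros r Er.
  apply Rnot_lt_le; intros t_lt_r.
  apply no_r; exists r; auto.
Qed.

Lemma lipschitz_rcontinuous (X : MetricSpace) (u : X -> R) :
  (forall a a', u a - dist a a' <= u a') -> rcontinuous u.
Proof.
  intros u_lip x e e_pos; exists e; split; [exact e_pos|].
  intros y dxy.
  pose proof (u_lip x y); pose proof (u_lip y x).
  rewrite (dist_sym _ y x) in *.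
  apply Rabs_def1; lra.
Qed.

Section ContinuousRadius.

Variables (X : MetricSpace) (P : X -> X -> Prop).

Hypothesis P_locally_uniform : forall a, exists r, 0 < r /\
  forall z b, dist a z < r -> dist z b < r -> P z b.

Definition admissible (a : X) (r : R) : Prop :=
  0 <= r <= 1 /\ forall z b, dist a z + dist z b < r -> P z b.

Lemma admissible0 a : admissible a 0.
Proof.
  split; [lra|]; intros z b.
  pose proof (dist_nonneg _ a z); pose proof (dist_nonneg _ z b); lra.
Qed.

Lemma admissible_bound a : bound (admissible a).
Proof. exists 1; intros r adm; apply adm. Qed.

Definition radius (a : X) : R :=
  proj1_sig (completeness _ (admissible_bound a) (ex_intro _ 0 (admissible0 a))).

Lemma radius_lub a : is_lub (admissible a) (radius a).
Proof. exact (proj2_sig (completeness _ _ _)). Qed.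

Lemma radius_pos a : 0 < radius a.
Proof.
  destruct (P_locally_uniform a) as [r0 [r0_pos Pr0]].
  assert (adm : admissible a (Rmin r0 1)).
  { split; [split; [apply Rlt_le, Rmin_pos|apply Rmin_r]; lra|].
    intros z b dazb; pose proof (Rmin_l r0 1).
    pose proof (dist_nonneg _ a z); pose proof (dist_nonneg _ z b).
    apply Pr0; lra. }
  pose proof (proj1 (radius_lub a) _ adm); pose proof (Rmin_pos r0 1); lra.
Qed.

Lemma radius_spec a b : dist a b < radius a -> P a b.
Proof.
  intros dab.
  destruct (lub_approx _ _ _ (radius_lub a) dab) as [r [[_ adm] dab_r]].
  apply adm; rewrite (proj2 (dist_eq0 _ a a) eq_refl); lra.
Qed.

Lemma radius_lipschitz a a' : radius a - dist a a' <= radius a'.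
Proof.
  apply Rnot_lt_le; intros too_small.
  destruct (lub_approx (admissible a) (radius a) (radius a' + dist a a'))
    as [r [[r_bnd adm] r_big]]; [exact (radius_lub a)|lra|].
  assert (adm' : admissible a' (r - dist a a')).
  { pose proof (proj1 (radius_lub a') 0 (admissible0 a')).
    pose proof (dist_nonneg _ a a').
    split; [lra|]; intros z b dz.
    pose proof (dist_tri _ a a' z); apply adm; lra. }
  pose proof (proj1 (radius_lub a') _ adm'); lra.
Qed.

Lemma exists_continuous_radius :
  exists delta : X -> R, pos_cont_fun delta /\
    forall a b, dist a b < delta a -> P a b.
Proof.
  exists radius; repeat split.
  - exact (lipschitz_rcontinuous _ _ radius_lipschitz).
  - exact radius_pos.
  - exact radius_spec.
Qed.

End ContinuousRadius.

Lemma rcontinuous_comp (X Y : MetricSpace) (h : X -> Y) (e : Y -> R) :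
  mcontinuous h -> rcontinuous e -> rcontinuous (fun x => e (h x)).
Proof.
  intros h_cont e_cont x t t_pos.
  destruct (e_cont (h x) t t_pos) as [eta [eta_pos e_eta]].
  destruct (h_cont x eta eta_pos) as [delta [delta_pos h_delta]].
  exists delta; split; auto.
Qed.

Lemma continuous_locally_uniform (X Y : MetricSpace) (h : X -> Y) (e : X -> R) :
  mcontinuous h -> pos_cont_fun e ->
  forall a, exists r, 0 < r /\
    forall z b, dist a z < r -> dist z b < r -> dist (h z) (h b) < e z.
Proof.
  intros h_cont [e_cont e_pos] a.
  pose proof (e_pos a).
  destruct (e_cont a (e a / 2)) as [eta [eta_pos e_eta]]; [lra|].
  destruct (h_cont a (e a / 4)) as [rho [rho_pos h_rho]]; [lra|].
  exists (Rmin eta rho / 2); split; [pose proof (Rmin_pos _ _ eta_pos rho_pos); lra|].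
  intros z b daz dzb.
  pose proof (Rmin_l eta rho); pose proof (Rmin_r eta rho).
  pose proof (dist_tri _ a z b).
  assert (ez : e a / 2 < e z)
    by (pose proof (e_eta z ltac:(lra)) as Hz; apply Rabs_def2 in Hz; lra).
  pose proof (h_rho z ltac:(lra)); pose proof (h_rho b ltac:(lra)).
  pose proof (dist_tri _ (h z) (h a) (h b)) as tri; rewrite (dist_sym _ (h z) (h a)) in tri.
  lra.
Qed.

Lemma CPlus_conj (X Y : MetricSpace) (f : X -> X) (g : Y -> Y) (h : X -> Y) :
  mcontinuous h -> (forall x, h (f x) = g (h x)) ->
  forall x y, CPlus f x y -> CPlus g (h x) (h y).
Proof.
  intros h_cont hf x y chain eps eps_pc.
  assert (eps_h_pc : pos_cont_fun (fun x => eps (h x)))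
    by (split; [apply rcontinuous_comp, eps_pc|intros; apply eps_pc]; exact h_cont).
  destruct (exists_continuous_radius X (fun a b => dist (h a) (h b) < eps (h a))
              (continuous_locally_uniform _ _ h _ h_cont eps_h_pc))
    as [delta [delta_pc delta_spec]].
  destruct (chain delta delta_pc) as [n [c [n_pos [c0 [cn steps]]]]].
  exists n, (fun i => h (c i)); repeat split; [exact n_pos|congruence|congruence|].
  intros i i_lt; rewrite <- hf; apply delta_spec, steps, i_lt.
Qed.

Theorem lemma4p1 (X Y : MetricSpace) (f : X -> X) (g : Y -> Y) (h : X -> Y) :
  homeomorphism h ->
  (forall x, h (f x) = g (h x)) ->
  forall x y : X, CPlus f x y <-> CPlus g (h x) (h y).
Proof.
  intros [k [h_cont [k_cont [kh hk]]]] hf x y; split.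
  - exact (CPlus_conj _ _ _ _ _ h_cont hf x y).
  - assert (kg : forall y, k (g y) = f (k y))
      by (intros y'; rewrite <- (hk y'), <- hf, !kh; reflexivity).
    rewrite <- (kh x), <- (kh y) at 2.
    exact (CPlus_conj _ _ _ _ _ k_cont kg (h x) (h y)).
Qed.
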